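(* Let $(X_t)$ be a time-homogeneous Markov chain (random walk) on a countable set of sites. Let $S$ be a finite set of occupied sites, let $0$ be a source site, and assume that from any site the walk a.s. eventually leaves any finite set. Let $x\ne y$ be sites not in $S$. Consider the following two procedures. Sequential: particle 1 starts at $0$ and walks until it first visits a site outside $S$, where it sticks. Then particle 2 starts at $0$ and walks until it first visits a site outside the enlarged cluster, where it sticks. Simultaneous: both particles start at $0$ and take steps synchronously, independently. Each particle sticks at the first site it visits that is unoccupied at that moment, and a stuck particle's site becomes occupied immediately. If both particles first reach the same unoccupied site at the same time, particle 1 sticks there and particle 2 continues. Then the probability that the final cluster equals $S\cup\{x,y\}$ is the same under both procedures. Consequently the two procedures yield the same probability distribution of final clusters. *)

From HB Require Import structures.
From mathcomp Require Import all_boot all_order all_algebra.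
From mathcomp Require Import boolp classical_sets functions cardinality reals
  ereal esum.
Set Implicit Arguments. Unset Strict Implicit. Unset Printing Implicit Defensive.
Import Order.TTheory GRing.Theory Num.Theory.
Local Open Scope classical_set_scope.
Local Open Scope ring_scope.

Section Walks.
Variables (R : realType) (V : countType).

Fixpoint pweight (P : V -> V -> R) (s : seq V) : R :=
  match s with
  | u :: ((v :: _) as t) => P u v * pweight P t
  | _ => 1
  end.

(* p is a walk started at u, staying in A at all times before its last
   step, and whose last site is outside A: i.e. p is the trajectory of the
   walk from u up to (and including) its first visit to the complement of A. *)
Definition exit_path (A : set V) (u : V) (p : seq V) : Prop :=
  [/\ (0 < size p)%N, head u p = u,
      (forall t, (t < (size p).-1)%N -> A (nth u p t)) & ~ A (last u p)].

Definition exit_prob (P : V -> V -> R) (A : set V) (u : V) : \bar R :=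
  \esum_(p in exit_path A u) (pweight P p)%:E.

(* SEQUENTIAL procedure: pairs (p1, p2) of trajectories (particle 1 up to
   sticking, then particle 2 up to sticking), with final cluster C. *)
Definition seq_event (S : set V) (o : V) (C : set V) : set (seq V * seq V) :=
  [set pq | exit_path S o pq.1
          /\ exit_path (S `|` [set last o pq.1]) o pq.2
          /\ S `|` [set last o pq.1; last o pq.2] = C].

Definition seq_prob (P : V -> V -> R) (S : set V) (o : V) (C : set V) : \bar R :=
  \esum_(pq in seq_event S o C) (pweight P pq.1 * pweight P pq.2)%:E.

(* Particle i's trajectory up to its sticking time
   n_i is p_i (so n_i = (size p_i).-1, and particle i sits at nth o p_i t at
   time t <= n_i).  Sites occupied as seen by particle 1 at time t: S and the
   site of particle 2 if it stuck strictly before t (at the same time,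
   particle 1 has priority). *)
Definition occ1 (S : set V) (o : V) (p2 : seq V) (t : nat) : set V :=
  S `|` [set z | ((size p2).-1 < t)%N /\ z = last o p2].

Definition occ2 (S : set V) (o : V) (p1 : seq V) (t : nat) : set V :=
  S `|` [set z | ((size p1).-1 <= t)%N /\ z = last o p1].

Definition sim_valid (S : set V) (o : V) (p1 p2 : seq V) : Prop :=
  [/\ (0 < size p1)%N /\ head o p1 = o,
      (0 < size p2)%N /\ head o p2 = o,
      (forall t, (t < (size p1).-1)%N -> occ1 S o p2 t (nth o p1 t))
        /\ ~ occ1 S o p2 (size p1).-1 (last o p1)
    & (forall t, (t < (size p2).-1)%N -> occ2 S o p1 t (nth o p2 t))
        /\ ~ occ2 S o p1 (size p2).-1 (last o p2)].

Definition sim_event (S : set V) (o : V) (C : set V) : set (seq V * seq V) :=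
  [set pq | sim_valid S o pq.1 pq.2
          /\ S `|` [set last o pq.1; last o pq.2] = C].

(* Independent walkers: the probability of the pair of trajectories is the
   product of the individual weights. *)
Definition sim_prob (P : V -> V -> R) (S : set V) (o : V) (C : set V) : \bar R :=
  \esum_(pq in sim_event S o C) (pweight P pq.1 * pweight P pq.2)%:E.

End Walks.

From HB Require Import structures.
From mathcomp Require Import all_boot all_order all_algebra.
From mathcomp Require Import boolp classical_sets functions cardinality reals
  ereal esum.
From mathcomp Require Import zify.
Set Implicit Arguments. Unset Strict Implicit. Unset Printing Implicit Defensive.
Import Order.TTheory GRing.Theory Num.Theory.
Local Open Scope classical_set_scope.
Local Open Scope ring_scope.

(* Both procedures are sums, over pairs of trajectories (particle 1 up to its
   sticking time, particle 2 up to its sticking time), of the product of the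
   transition weights, and the two index sets for a given final cluster are in
   weight-preserving bijection.  The procedures differ only when particle 2,
   walking sequentially, first leaves S at the final site x of particle 1 at a
   time m before particle 1 reached x: simultaneously, particle 2 sticks at x
   at time m and particle 1 goes on.  Exchanging the tails of the two
   trajectories after time m turns one scenario into the other, and it keeps
   the product of weights since both tails start at x.  The bijection does not
   depend on the weights. *)

Section FindNth.
Variables (T : Type) (x0 : T) (a : pred T).

Lemma find_leq_nth (s : seq T) i : (i < size s)%N -> a (nth x0 s i) ->
  (find a s <= i)%N.
Proof.
by move=> ilt ai; rewrite leqNgt; apply/negP => /(before_find x0); rewrite ai.
Qed.

Lemma find_eq_nth (s : seq T) i : (i < size s)%N -> a (nth x0 s i) ->
  (forall j, (j < i)%N -> ~~ a (nth x0 s j)) -> find a s = i.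
Proof.
move=> ilt ai before_i; apply/eqP; rewrite eqn_leq find_leq_nth //= leqNgt.
apply/negP => /before_i; rewrite nth_find // has_find.
exact: leq_ltn_trans (find_leq_nth ilt ai) ilt.
Qed.

End FindNth.

Section Weight.
Variables (R : realType) (V : countType) (P : V -> V -> R).

Lemma pweight_cons_cat x (s t : seq V) :
  pweight P (x :: s ++ t) = pweight P (x :: s) * pweight P (last x s :: t).
Proof.
elim: s x => [|y s IH] x; first by rewrite mul1r.
have pweight2 u w l : pweight P [:: u, w & l] = P u w * pweight P (w :: l) by [].
by rewrite cat_cons pweight2 IH pweight2 mulrA.
Qed.

Lemma pweight_cat x0 (s t : seq V) : (0 < size s)%N ->
  pweight P (s ++ t) = pweight P s * pweight P (last x0 s :: t).
Proof. by case: s => // x s _; rewrite cat_cons pweight_cons_cat. Qed.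

Lemma pweight_graft x0 (p q : seq V) m : (0 < size p)%N -> (m < size q)%N ->
  last x0 p = nth x0 q m ->
  pweight P (p ++ drop m.+1 q) * pweight P (take m.+1 q) =
  pweight P p * pweight P q.
Proof.
move=> p_gt0 m_lt p_last.
have take_size : size (take m.+1 q) = m.+1 by exact: size_takel.
rewrite -[in RHS](cat_take_drop m.+1 q) (pweight_cat x0 _ p_gt0).
rewrite (pweight_cat x0 (s := take m.+1 q)) ?take_size //.
by rewrite p_last -nth_last take_size nth_take // -mulrA [X in _ * X]mulrC.
Qed.

End Weight.

Section TwoParticles.
Variables (V : countType) (S : set V) (o : V).

Lemma exit_pathP A (p : seq V) : exit_path A o p <-> exists n,
  [/\ size p = n.+1, nth o p 0 = o, forall t, (t < n)%N -> A (nth o p t)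
    & ~ A (nth o p n)].
Proof.
split=> [[p_gt0 p0 p_in p_out] | [n [p_size p0 p_in p_out]]].
  exists (size p).-1; rewrite nth0 nth_last; split=> //; lia.
by split; rewrite ?p_size -?nth0 -?nth_last ?p_size.
Qed.

Record seq_run (C : set V) (p1 p2 : seq V) (n1 n2 : nat) : Prop := SeqRun {
  seq_size1 : size p1 = n1.+1;
  seq_size2 : size p2 = n2.+1;
  seq_start1 : nth o p1 0 = o;
  seq_start2 : nth o p2 0 = o;
  seq_in1 : forall t, (t < n1)%N -> S (nth o p1 t);
  seq_out1 : ~ S (nth o p1 n1);
  seq_in2 : forall t, (t < n2)%N -> S (nth o p2 t) \/ nth o p2 t = nth o p1 n1;
  seq_out2 : ~ S (nth o p2 n2);
  seq_neq : nth o p2 n2 <> nth o p1 n1;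
  seq_cluster : S `|` [set nth o p1 n1; nth o p2 n2] = C }.

Record sim_run (C : set V) (p1 p2 : seq V) (n1 n2 : nat) : Prop := SimRun {
  sim_size1 : size p1 = n1.+1;
  sim_size2 : size p2 = n2.+1;
  sim_start1 : nth o p1 0 = o;
  sim_start2 : nth o p2 0 = o;
  sim_in1 : forall t, (t < n1)%N ->
    S (nth o p1 t) \/ (n2 < t)%N /\ nth o p1 t = nth o p2 n2;
  sim_out1 : ~ S (nth o p1 n1);
  sim_free1 : (n2 < n1)%N -> nth o p1 n1 <> nth o p2 n2;
  sim_in2 : forall t, (t < n2)%N ->
    S (nth o p2 t) \/ (n1 <= t)%N /\ nth o p2 t = nth o p1 n1;
  sim_out2 : ~ S (nth o p2 n2);
  sim_free2 : (n1 <= n2)%N -> nth o p2 n2 <> nth o p1 n1;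
  sim_cluster : S `|` [set nth o p1 n1; nth o p2 n2] = C }.

Lemma last_nth (p : seq V) n : size p = n.+1 -> last o p = nth o p n.
Proof. by move=> p_size; rewrite -nth_last p_size. Qed.

Lemma seq_eventP C p1 p2 :
  seq_event S o C (p1, p2) <-> exists n1 n2, seq_run C p1 p2 n1 n2.
Proof.
split=> [[/exit_pathP [n1 [size1 start1 in1 out1]]]
          [/exit_pathP [n2 [size2 start2 in2 out2]] cluster] | [n1 [n2 run]]].
  rewrite /= (last_nth size1) in in2 out2 cluster.
  rewrite (last_nth size2) in cluster.
  by exists n1, n2; split=> // ?; apply: out2; [left | right].
case: run => size1 size2 start1 start2 in1 out1 in2 out2 neq cluster.
split; [|split]; rewrite /= ?(last_nth size1) ?(last_nth size2) //.
- by apply/exit_pathP; exists n1.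
- by apply/exit_pathP; exists n2; split=> // -[].
Qed.

Lemma sim_eventP C p1 p2 :
  sim_event S o C (p1, p2) <-> exists n1 n2, sim_run C p1 p2 n1 n2.
Proof.
rewrite /sim_event /sim_valid /occ1 /occ2 /=.
split=> [[[[p1_gt0 start1] [p2_gt0 start2] [in1 out1] [in2 out2]] cluster]
        | [n1 [n2 []]]].
  exists (size p1).-1, (size p2).-1.
  split; rewrite ?nth0 ?nth_last //; try lia.
  - by move=> ?; apply: out1; left.
  - by move=> ? ?; apply: out1; right.
  - by move=> ?; apply: out2; left.
  - by move=> ? ?; apply: out2; right.
move=> size1 size2 start1 start2 in1 out1 free1 in2 out2 free2 cluster.
rewrite (last_nth size1) (last_nth size2) size1 size2 -!nth0 /=.
split=> //; split=> //; split=> // -[// | [lt_n eq_site]].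
- exact: free1 lt_n eq_site.
- exact: free2 lt_n eq_site.
Qed.

Definition outside (z : V) : bool := `[< ~ S z >].

Lemma find_outside_leq (p : seq V) n : (n < size p)%N -> ~ S (nth o p n) ->
  (find outside p <= n)%N.
Proof. by move=> n_lt /asboolP; apply: find_leq_nth. Qed.

Lemma nth_find_outside (p : seq V) n : (n < size p)%N -> ~ S (nth o p n) ->
  ~ S (nth o p (find outside p)).
Proof.
move=> n_lt n_out; suff : has outside p by move=> /(nth_find o) /asboolP.
rewrite has_find; exact: leq_ltn_trans (find_outside_leq n_lt n_out) n_lt.
Qed.

Lemma before_find_outside (p : seq V) t : (t < find outside p)%N ->
  S (nth o p t).
Proof. by move=> /(before_find o) /negbT /asboolPn /contrapT. Qed.

Lemma find_outside_eq (p : seq V) n : (n < size p)%N -> ~ S (nth o p n) ->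
  (forall t, (t < n)%N -> S (nth o p t)) -> find outside p = n.
Proof.
move=> n_lt /asboolP out_n in_S; apply: find_eq_nth n_lt out_n _ => t /in_S.
by apply: contraPN => /asboolP.
Qed.

(* [m] is the time particle 2 first leaves [S]; the tails are exchanged when
   that happens at particle 1's final site before particle 1 sticks there.
   [to_seq] undoes the exchange. *)
Definition to_sim (pq : seq V * seq V) : seq V * seq V :=
  let: (p1, p2) := pq in let m := find outside p2 in
  if (m < (size p1).-1)%N && (nth o p2 m == last o p1)
  then (p1 ++ drop m.+1 p2, take m.+1 p2) else pq.

Definition to_seq (pq : seq V * seq V) : seq V * seq V :=
  let: (p1, p2) := pq in let k := find outside p1 in
  if (k < (size p1).-1)%N then (take k.+1 p1, p2 ++ drop k.+1 p1) else pq.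

Section ToSim.
Variables (C : set V) (p1 p2 : seq V) (n1 n2 : nat).
Hypothesis run : seq_run C p1 p2 n1 n2.
Local Notation m := (find outside p2).

Lemma to_simE : to_sim (p1, p2) =
  if (m < n1)%N && (nth o p2 m == nth o p1 n1)
  then (p1 ++ drop m.+1 p2, take m.+1 p2) else (p1, p2).
Proof. by rewrite /to_sim (seq_size1 run) (last_nth (seq_size1 run)). Qed.

Lemma find_outside2_lt : nth o p2 m = nth o p1 n1 -> (m < n2)%N.
Proof.
case: run => _ size2 _ _ _ _ _ out2 neq _ hit.
rewrite ltn_neqAle find_outside_leq ?size2 // andbT.
by apply/eqP => m_eq; apply: neq; rewrite -m_eq.
Qed.

Lemma to_sim_swap : (m < n1)%N -> nth o p2 m = nth o p1 n1 ->
  sim_run C (p1 ++ drop m.+1 p2) (take m.+1 p2) (n1 + n2 - m) m.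
Proof.
case: run => size1 size2 start1 start2 in1 _ in2 out2 neq cluster m_lt hit.
have m_lt2 := find_outside2_lt hit.
have nth1 t : nth o (p1 ++ drop m.+1 p2) t =
    if (t < n1.+1)%N then nth o p1 t else nth o p2 (m.+1 + (t - n1.+1)).
  by rewrite nth_cat nth_drop size1.
have nth2 t : (t < m.+1)%N -> nth o (take m.+1 p2) t = nth o p2 t.
  by move=> t_lt; rewrite nth_take.
have last1 : nth o (p1 ++ drop m.+1 p2) (n1 + n2 - m) = nth o p2 n2.
  by rewrite nth1 ifF; [congr nth; lia | lia].
split; rewrite ?last1 ?nth2 //.
- by rewrite size_cat size_drop size1 size2; lia.
- by rewrite size_takel // size2; lia.
- by rewrite nth1.
- move=> t t_lt; rewrite nth1 hit; case: ltnP => t_n1.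
    have [t_lt1 | ->] : (t < n1)%N \/ t = n1 by lia.
      by left; apply: in1.
    by right; split; first lia.
  have [|in_S | at_site1] := in2 (m.+1 + (t - n1.+1))%N; first lia.
    by left.
  by right; split; first lia.
- by rewrite hit => _; apply: neq.
- by move=> t t_lt; left; rewrite nth2; [apply: before_find_outside | lia].
- by apply: nth_find_outside out2; rewrite size2.
- lia.
- by rewrite hit -cluster [[set _; _]]setUC.
Qed.

Lemma to_sim_keep : ~~ ((m < n1)%N && (nth o p2 m == nth o p1 n1)) ->
  sim_run C p1 p2 n1 n2.
Proof.
case: run => size1 size2 start1 start2 in1 out1 in2 out2 neq cluster keep.
split=> // [t t_lt | _ | t t_lt].
- by left; apply: in1.
- exact/nesym.
- have [in_S | at_site1] := in2 t t_lt; [by left | right; split=> //].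
  rewrite leqNgt; apply: contraNN keep => t_lt1.
  have m_le : (m <= t)%N.
    by apply: find_outside_leq; [rewrite size2; lia | rewrite at_site1].
  have m_out : ~ S (nth o p2 m) by apply: nth_find_outside out2; rewrite size2.
  have [|//|->] := in2 m; first lia.
  by rewrite eqxx andbT; lia.
Qed.

Lemma to_sim_event : sim_event S o C (to_sim (p1, p2)).
Proof.
apply/sim_eventP; rewrite to_simE.
case: ifP => [/andP [m_lt /eqP hit] | /negbT keep].
  by do 2 eexists; apply: to_sim_swap.
by exists n1, n2; apply: to_sim_keep.
Qed.

Lemma to_simK : to_seq (to_sim (p1, p2)) = (p1, p2).
Proof.
case: run => size1 size2 _ _ in1 out1 _ _ _ _.
have find1 : find outside p1 = n1 by apply: find_outside_eq; rewrite ?size1.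
rewrite to_simE; case: ifP => [/andP [m_lt /eqP hit] | _]; last first.
  by rewrite /to_seq find1 size1 ltnn.
have m_lt2 := find_outside2_lt hit.
rewrite /to_seq find_cat has_find find1 size1 ltnSn.
rewrite size_cat size_drop size1 size2.
rewrite ifT; last lia.
by rewrite take_size_cat ?drop_size_cat ?cat_take_drop.
Qed.

Lemma pweight_to_sim (R : realType) (P : V -> V -> R) :
  pweight P (to_sim (p1, p2)).1 * pweight P (to_sim (p1, p2)).2 =
  pweight P p1 * pweight P p2.
Proof.
case: run => size1 size2 _ _ _ _ _ _ _ _.
rewrite to_simE; case: ifP => [/andP [m_lt /eqP hit] | _] //=.
apply: (@pweight_graft _ _ P o); rewrite ?size1 ?(last_nth size1) //.
by rewrite size2; apply/ltnW/find_outside2_lt.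
Qed.

End ToSim.

Section ToSeq.
Variables (C : set V) (p1 p2 : seq V) (n1 n2 : nat).
Hypothesis run : sim_run C p1 p2 n1 n2.
Local Notation k := (find outside p1).

Lemma to_seqE : to_seq (p1, p2) =
  if (k < n1)%N then (take k.+1 p1, p2 ++ drop k.+1 p1) else (p1, p2).
Proof. by rewrite /to_seq (sim_size1 run). Qed.

(* Particle 1 can only pass a site outside [S] if particle 2 already stuck
   there, and then particle 2 never left [S] before sticking. *)
Lemma find_outside1_blocked : (k < n1)%N ->
  [/\ (n2 < k)%N, nth o p1 k = nth o p2 n2 & find outside p2 = n2].
Proof.
case: run => size1 size2 _ _ in1 out1 _ in2 out2 _ _ k_lt.
have k_out : ~ S (nth o p1 k) by apply: nth_find_outside out1; rewrite size1.
have [//|[n2_lt k_site2]] := in1 k k_lt; split=> //.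
apply: find_outside_eq out2 _; first by rewrite size2.
by move=> t t_lt; have [//|] := in2 t t_lt; lia.
Qed.

Lemma to_seq_swap : (k < n1)%N ->
  seq_run C (take k.+1 p1) (p2 ++ drop k.+1 p1) k (n2 + n1 - k).
Proof.
move=> k_lt; have [n2_lt k_site2 find2] := find_outside1_blocked k_lt.
case: run => size1 size2 start1 start2 in1 out1 free1 _ _ _ cluster.
have nth1 t : (t < k.+1)%N -> nth o (take k.+1 p1) t = nth o p1 t.
  by move=> t_lt; rewrite nth_take.
have nth2 t : nth o (p2 ++ drop k.+1 p1) t =
    if (t < n2.+1)%N then nth o p2 t else nth o p1 (k.+1 + (t - n2.+1)).
  by rewrite nth_cat nth_drop size2.
have last2 : nth o (p2 ++ drop k.+1 p1) (n2 + n1 - k) = nth o p1 n1.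
  by rewrite nth2 ifF; [congr nth; lia | lia].
split; rewrite ?last2 ?nth1 //.
- by rewrite size_takel // size1; lia.
- by rewrite size_cat size_drop size1 size2; lia.
- by rewrite nth2.
- by move=> t t_lt; rewrite nth1; [apply: before_find_outside | lia].
- by apply: nth_find_outside out1; rewrite size1.
- move=> t t_lt; rewrite nth2 k_site2; case: ltnP => t_n2.
    have [t_lt2 | ->] : (t < n2)%N \/ t = n2 by lia.
      by left; apply: before_find_outside; rewrite find2.
    by right.
  have [|in_S | [_ at_site2]] := in1 (k.+1 + (t - n2.+1))%N; first lia.
    by left.
  by right.
- by rewrite k_site2; apply: free1; lia.
- by rewrite k_site2 -cluster [[set _; _]]setUC.
Qed.

Lemma to_seq_keep : ~~ (k < n1)%N -> seq_run C p1 p2 n1 n2.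
Proof.
case: run => size1 size2 start1 start2 in1 out1 free1 in2 out2 free2 cluster.
move=> keep.
have find1 : k = n1.
  by apply/eqP; rewrite eqn_leq find_outside_leq ?size1 //= leqNgt.
split=> // [t t_lt | t t_lt | ].
- by apply: before_find_outside; rewrite find1.
- by have [in_S | [_ at_site1]] := in2 t t_lt; [left | right].
- case: (leqP n1 n2) => [/free2 // | /free1 ne12 eq21].
  exact: ne12 (esym eq21).
Qed.

Lemma to_seq_event : seq_event S o C (to_seq (p1, p2)).
Proof.
apply/seq_eventP; rewrite to_seqE.
case: ifP => [k_lt | /negbT keep].
  by do 2 eexists; apply: to_seq_swap.
by exists n1, n2; apply: to_seq_keep.
Qed.

Lemma to_seqK : to_sim (to_seq (p1, p2)) = (p1, p2).
Proof.
rewrite to_seqE; case: ifP => [k_lt | /negbT keep].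
  have [n2_lt k_site2 find2] := find_outside1_blocked k_lt.
  have size2 := sim_size2 run.
  rewrite (to_simE (to_seq_swap k_lt)) find_cat has_find find2 size2 ltnSn.
  rewrite nth_cat size2 ltnSn nth_take // k_site2 eqxx n2_lt /=.
  by rewrite take_size_cat ?drop_size_cat ?cat_take_drop.
rewrite (to_simE (to_seq_keep keep)); case: ifP => // /andP [m_lt /eqP hit].
have m_lt2 := find_outside2_lt (to_seq_keep keep) hit.
have m_out : ~ S (nth o p2 (find outside p2)).
  by apply: nth_find_outside (sim_out2 run); rewrite (sim_size2 run).
by have [//|[m_ge _]] := sim_in2 run m_lt2; lia.
Qed.

End ToSeq.

Lemma seq_prob_sim_prob (R : realType) (P : V -> V -> R) C :
  seq_prob P S o C = sim_prob P S o C.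
Proof.
rewrite /seq_prob /sim_prob.
rewrite (reindex_esum (seq_event S o C) (sim_event S o C) to_sim).
  apply: eq_esum => -[p1 p2] /seq_eventP [n1 [n2 run]].
  by rewrite (pweight_to_sim run).
split.
- by move=> [p1 p2] /seq_eventP [n1 [n2 run]]; apply: to_sim_event run.
- move=> [p1 p2] [q1 q2]; rewrite !in_setE.
  move=> /seq_eventP [n1 [n2 run]] /seq_eventP [m1 [m2 run']] eq_sim.
  by rewrite -(to_simK run) -(to_simK run') eq_sim.
- move=> [p1 p2] /sim_eventP [n1 [n2 run]].
  by exists (to_seq (p1, p2)); [apply: to_seq_event run | apply: to_seqK run].
Qed.

End TwoParticles.

Theorem mainTheorem8 (R : realType) (V : countType) (P : V -> V -> R)
  (S : set V) (o : V)
  (P_ge0 : forall u v, 0 <= P u v)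
  (P_stoch : forall u, \esum_(v in [set: V]) (P u v)%:E = 1%E)
  (P_leaves : forall (F : set V) (u : V), finite_set F -> exit_prob P F u = 1%E)
  (S_fin : finite_set S) :
  (forall x y : V, x <> y -> ~ S x -> ~ S y ->
     seq_prob P S o (S `|` [set x; y]) = sim_prob P S o (S `|` [set x; y]))
  /\ (forall C : set V, seq_prob P S o C = sim_prob P S o C).
Proof. by split=> [x y _ _ _ | C]; apply: seq_prob_sim_prob. Qed.
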